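(* Let $P$ be a finite $(3+1)$-free poset, $(A_1,A_2)$ a pair of chains of $P$, $H$ an unbalanced ladder of $(A_1,A_2)$, and $(A'_1,A'_2)$ the pair obtained by the ladder swap on $H$. Then $\mathbf u_{A_1}\mathbf u_{A_2}\equiv\mathbf u_{A'_1}\mathbf u_{A'_2}\pmod{I^P_H}$.
   Context: $a<_Pb$: strict order; $a\sim_Pb$: incomparable or equal. $\mathcal{U}_P=\mathbb{Z}\langle u_a:a\in P\rangle$. For a chain $C=\{c_k>_P\cdots>_Pc_1\}$, $\mathbf u_C=u_{c_k}\cdots u_{c_1}$. $I^P_H$ is the two-sided ideal generated by $u_cu_a-u_au_c$ ($a<_Pc$) and $u_cu_au_b-u_bu_cu_a$ ($a\sim_Pb$, $b\sim_Pc$, $a<_Pc$). A ladder of $(A_1,A_2)$ is a connected component of the bipartite graph on $A_1\sqcup A_2$ with edges $x$—$y$ ($x\in A_1,y\in A_2$) when $x\sim_Py$; it is unbalanced if $|H\cap A_1|\ne|H\cap A_2|$. The ladder swap on $H$ gives $A'_1=(A_1\setminus H)\cup(H\cap A_2)$ and $A'_2=(A_2\setminus H)\cup(H\cap A_1)$, which are again chains. *)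

From HB Require Import structures.
From mathcomp Require Import all_boot all_order all_algebra.
Set Implicit Arguments. Unset Strict Implicit. Unset Printing Implicit Defensive.
Import Order.TTheory GRing.Theory Num.Theory.

Local Open Scope order_scope.

Section Defs.
Context {disp : Order.disp_t} {P : finPOrderType disp}.

Definition simP (a b : P) : bool := ~~ (a < b) && ~~ (b < a).

Definition three_one_free : Prop :=
  forall a b c d : P, a < b -> b < c ->
    ~ [&& ~~ (d >=< a), ~~ (d >=< b) & ~~ (d >=< c)].

Definition is_chain (C : {set P}) : Prop :=
  forall x y, x \in C -> y \in C -> x >=< y.

(* Words in the free monoid on {u_a : a in P}; u_C = u_{c_k} ... u_{c_1}
   is the word listing the chain C in decreasing order. *)
Definition uC (C : {set P}) : seq P := sort (fun x y => y <= x) (enum C).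

(* Elements of Z<u_a : a in P> are represented by their coefficient
   functions on words (finitely supported); a monomial w is the indicator. *)
Definition mon (w : seq P) : seq P -> int := fun v => Posz (nat_of_bool (v == w)).

(* The generators of I^P_H, each a binomial  p - q  of words. *)
Definition genH (p q : seq P) : Prop :=
  (exists a c : P, a < c /\ p = [:: c; a] /\ q = [:: a; c]) \/
  (exists a b c : P, [/\ simP a b, simP b c, a < c,
      p = [:: c; a; b] & q = [:: b; c; a]]).

(* A term (k, l, (p, q), r) denotes k * u_l * (u_p - u_q) * u_r.
   Two-sided ideal generated by the genH: all finite Z-combinations. *)
Definition term := (int * seq P * (seq P * seq P) * seq P)%type.

Definition term_coef (t : term) (w : seq P) : int :=
  let: (k, l, (p, q), r) := t in
  (k * (mon (l ++ p ++ r) w - mon (l ++ q ++ r) w))%R.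

Definition in_IH (f : seq P -> int) : Prop :=
  exists ts : seq term,
    (forall t, t \in ts -> genH t.1.2.1 t.1.2.2) /\
    forall w, f w = (\sum_(t <- ts) term_coef t w)%R.

Definition congr_IH (f g : seq P -> int) : Prop :=
  in_IH (fun w => (f w - g w)%R).

(* Bipartite graph on A1 ⊔ A2: vertex (true, x) is x in A1,
   (false, y) is y in A2; edge when x ~_P y. *)
Definition vert (A1 A2 : {set P}) (v : bool * P) : bool :=
  if v.1 then v.2 \in A1 else v.2 \in A2.

Definition ladder_edge (A1 A2 : {set P}) : rel (bool * P) :=
  fun v w => [&& vert A1 A2 v, vert A1 A2 w, v.1 != w.1 & simP v.2 w.2].

Definition is_ladder (A1 A2 : {set P}) (H : {set bool * P}) : Prop :=
  exists2 v, vert A1 A2 v & H = [set w | connect (ladder_edge A1 A2) v w].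

Definition side (H : {set bool * P}) (b : bool) : {set P} :=
  [set x | (b, x) \in H].

Definition unbalanced (H : {set bool * P}) : Prop :=
  #|side H true| != #|side H false|.

Definition swap1 (A1 A2 : {set P}) (H : {set bool * P}) : {set P} :=
  (A1 :\: side H true) :|: side H false.
Definition swap2 (A1 A2 : {set P}) (H : {set bool * P}) : {set P} :=
  (A2 :\: side H false) :|: side H true.

End Defs.

From HB Require Import structures.
From mathcomp Require Import all_boot all_order all_algebra.
Set Implicit Arguments. Unset Strict Implicit. Unset Printing Implicit Defensive.
Import Order.TTheory GRing.Theory.

(* The generators give two local moves: adjacent comparable letters commute,
   and  c a b ≡ b c a  when a ~ b ~ c, a < c; hence blocks of pairwise
   comparable letters commute ([wcong_block]).

   Let S1 ⊆ A1 and S2 ⊆ A2 be the two sides of the ladder H.  Every other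
   letter of A1 or A2 is comparable to all of H, hence (H being connected)
   lies above all of H or below all of H.  So  u_{A_i} = Ab_i S_i Be_i  and
   the swapped chains read  Ab_1 S_2 Be_1  and  Ab_2 S_1 Be_2  ([uC_chainA],
   [uC_swap]); moving S2 left and S1 right over the comparable blocks
   Be_1 Ab_2 reduces the theorem to  S1 S2 ≡ S2 S1  ([swap_middles]).

   That last step is [desc_swap]: two decreasing chains whose incomparability
   graph is connected ([linked]) and which have different lengths commute.
   It goes by induction, peeling the tops; (3+1)-freeness ensures a letter
   incomparable to the top of a chain meets at most its first two letters
   ([sim_far]), and the cubic relation performs one peeling step
   ([swap_step]). *)

Local Open Scope order_scope.

Section PosetFacts.
Context {disp : Order.disp_t} {P : finPOrderType disp}.
Implicit Types (a b c d x y z : P).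

Lemma simPC a b : simP a b = simP b a.
Proof. by rewrite /simP andbC. Qed.

Lemma lt_nsim a b : a < b -> ~~ simP a b.
Proof. by rewrite /simP => ->. Qed.

Lemma gt_nsim a b : b < a -> ~~ simP a b.
Proof. by rewrite simPC; apply: lt_nsim. Qed.

Lemma nsimP a b : ~~ simP a b -> (a < b) || (b < a).
Proof. by rewrite /simP negb_and !negbK. Qed.

Lemma nsim_cmp a b : ~~ simP a b -> a >=< b.
Proof. by move/nsimP/orP => -[] ab; rewrite /Order.comparable (ltW ab) ?orbT. Qed.

Lemma chain_nsim (C : {set P}) a b :
  is_chain C -> a \in C -> b \in C -> a != b -> ~~ simP a b.
Proof.
move=> chC aC bC nab; have := chC a b aC bC.
rewrite /Order.comparable !le_eqVlt (negbTE nab) eq_sym (negbTE nab) /=.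
by case/orP => [/lt_nsim|/gt_nsim].
Qed.

Lemma sim_between a b c d : a < b -> b < c -> simP d a -> simP d c -> simP d b.
Proof.
move=> ab bc /andP[da ad] /andP[dc cd]; apply/andP; split.
  by apply: contra dc => db; apply: lt_trans db bc.
by apply: contra ad => bd; apply: lt_trans ab bd.
Qed.

Lemma nsim_same_side a b z : simP a b -> ~~ simP z a -> ~~ simP z b ->
  (a < z) = (b < z).
Proof.
move=> ab /nsimP za /nsimP zb; apply/idP/idP => lt_z.
  by case/orP: zb => // zb; move: ab; rewrite /simP (lt_trans lt_z zb).
by case/orP: za => // za; move: ab; rewrite /simP (lt_trans lt_z za) andbF.
Qed.

Lemma three_one_free_sim a b c d : three_one_free (P := P) ->
  a < b -> b < c -> simP d a -> simP d b -> simP d c -> False.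
Proof.
move=> tof ab bc da db dc.
have ncmp x : simP d x -> d != x -> ~~ (d >=< x).
  move=> /andP[dx xd] ndx; rewrite /Order.comparable !le_eqVlt (eq_sym x).
  by rewrite (negbTE ndx) (negbTE dx) (negbTE xd).
apply: (tof a b c d ab bc); rewrite !ncmp //.
- by apply: contraTneq da => ->; apply/gt_nsim/(lt_trans ab bc).
- by apply: contraTneq dc => ->; apply: lt_nsim.
- by apply: contraTneq db => ->; apply: lt_nsim.
Qed.

End PosetFacts.

Section WordCongruence.
Context {disp : Order.disp_t} {P : finPOrderType disp}.
Implicit Types (w l r : seq P) (x y a b c : P).

Definition wcong w w' := congr_IH (mon w) (mon w').

Lemma wcong_refl w : wcong w w.
Proof. by exists [::]; split => // u; rewrite big_nil subrr. Qed.

Lemma wcong_trans w1 w2 w3 : wcong w1 w2 -> wcong w2 w3 -> wcong w1 w3.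
Proof.
case=> ts1 [g1 e1] [ts2 [g2 e2]]; exists (ts1 ++ ts2); split.
  by move=> t; rewrite mem_cat => /orP[/g1|/g2].
by move=> u; rewrite big_cat /= -e1 -e2 addrA subrK.
Qed.

(* Negating every coefficient of a representation of w1 - w2 represents w2 - w1. *)
Lemma wcong_sym w1 w2 : wcong w1 w2 -> wcong w2 w1.
Proof.
case=> ts [g e]; exists [seq ((- t.1.1.1)%R, t.1.1.2, t.1.2, t.2) | t <- ts].
split; first by move=> t /mapP[t' /g + ->].
move=> u; rewrite big_map -opprB e -sumrN.
by apply: eq_bigr => -[[[k l] [p q]] r] _ /=; rewrite mulNr.
Qed.

Lemma wcong_comm l r x y : ~~ simP x y -> wcong (l ++ x :: y :: r) (l ++ y :: x :: r).
Proof.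
rewrite /simP negb_and !negbK => /orP[xy|yx].
  exists [:: ((-1)%R, l, ([:: y; x], [:: x; y]), r)]; split.
    by move=> t; rewrite inE => /eqP -> /=; left; exists x, y.
  by move=> u; rewrite big_seq1 /= mulN1r opprB.
exists [:: (1%R, l, ([:: x; y], [:: y; x]), r)]; split.
  by move=> t; rewrite inE => /eqP -> /=; left; exists y, x.
by move=> u; rewrite big_seq1 /= mul1r.
Qed.

Lemma wcong_three l r a b c : simP a b -> simP b c -> a < c ->
  wcong (l ++ c :: a :: b :: r) (l ++ b :: c :: a :: r).
Proof.
move=> ab bc ac; exists [:: (1%R, l, ([:: c; a; b], [:: b; c; a]), r)]; split.
  by move=> t; rewrite inE => /eqP -> /=; right; exists a, b, c.
by move=> u; rewrite big_seq1 /= mul1r.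
Qed.

Lemma wcong_move l r x (t : seq P) : (forall y, y \in t -> ~~ simP x y) ->
  wcong (l ++ x :: t ++ r) (l ++ t ++ x :: r).
Proof.
elim: t l => [|y t IH] l xt /=; first exact: wcong_refl.
apply: wcong_trans (wcong_comm _ _ (xt y (mem_head _ _))) _.
have := IH (rcons l y) (fun z zt => xt z (mem_behead (s := y :: t) zt)).
by rewrite -cats1 -!catA.
Qed.

Lemma wcong_block l r (s t : seq P) : (forall x y, x \in s -> y \in t -> ~~ simP x y) ->
  wcong (l ++ s ++ t ++ r) (l ++ t ++ s ++ r).
Proof.
elim: s l => [|x s IH] l st /=; first exact: wcong_refl.
have := IH (rcons l x) (fun a b a_s bt => st a b (mem_behead (s := x :: s) a_s) bt).
rewrite -cats1 -!catA /= => moved; apply: wcong_trans moved _.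
by apply: wcong_move => y; apply: st; rewrite mem_head.
Qed.

Lemma swap_middles (a1 s1 b1 a2 s2 b2 : seq P) :
  (forall l r, wcong (l ++ s1 ++ s2 ++ r) (l ++ s2 ++ s1 ++ r)) ->
  (forall x y, x \in b1 ++ a2 -> y \in s1 ++ s2 -> ~~ simP x y) ->
  wcong (a1 ++ s1 ++ b1 ++ a2 ++ s2 ++ b2) (a1 ++ s2 ++ b1 ++ a2 ++ s1 ++ b2).
Proof.
move=> s12 between.
have left_s2 := wcong_block (a1 ++ s1) b2 (s := b1 ++ a2) (t := s2).
have right_s1 := wcong_block (a1 ++ s2) b2 (s := s1) (t := b1 ++ a2).
rewrite -!catA in left_s2 right_s1.
apply: wcong_trans (left_s2 _) (wcong_trans (s12 _ _) (right_s1 _)).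
- by move=> x y xb ys; apply: between; rewrite // mem_cat ys orbT.
- move=> x y xs yb; rewrite simPC; apply: between; by rewrite // mem_cat xs.
Qed.

End WordCongruence.

Section Linked.
Context {disp : Order.disp_t} {P : finPOrderType disp}.
Implicit Types (a b x y u : P) (xs ys : seq P).

(* [linked xs ys]: the bipartite graph joining a in xs to b in ys when a ~_P b
   is connected, i.e. any pair of sets closed along its edges and meeting
   xs or ys contains all letters of xs and ys. *)
Definition linked xs ys := forall T1 T2 : {set P},
  (forall a b, a \in xs -> b \in ys -> simP a b -> (a \in T1) = (b \in T2)) ->
  (exists2 a, a \in xs & a \in T1) \/ (exists2 b, b \in ys & b \in T2) ->
  {subset xs <= T1} /\ {subset ys <= T2}.

Lemma linked_sym xs ys : linked xs ys -> linked ys xs.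
Proof.
move=> lk T1 T2 cl ne; have [] // := lk T2 T1.
  by move=> a b axs bys ab; rewrite (cl b a) // simPC.
by case: ne; [right|left].
Qed.

Lemma linked_prefix p1 s1 p2 s2 :
  uniq (p1 ++ s1) -> uniq (p2 ++ s2) -> linked (p1 ++ s1) (p2 ++ s2) ->
  (p1 != [::]) || (p2 != [::]) ->
  (forall a b, a \in p1 -> b \in s2 -> ~~ simP a b) ->
  (forall a b, a \in s1 -> b \in p2 -> ~~ simP a b) ->
  s1 = [::] /\ s2 = [::].
Proof.
rewrite !cat_uniq => /and3P[_ /hasPn dis1 _] /and3P[_ /hasPn dis2 _] lk ne h12 h21.
have [in1 in2] : {subset p1 ++ s1 <= [set a | a \in p1]} /\
                 {subset p2 ++ s2 <= [set b | b \in p2]}.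
  apply: lk.
  + move=> a b; rewrite !mem_cat !inE => /orP[ap|as1] /orP[bp|bs2] ab.
    * by rewrite ap bp.
    * by move: (h12 a b ap bs2); rewrite ab.
    * by move: (h21 a b as1 bp); rewrite ab.
    * by rewrite (negbTE (dis1 a as1)) (negbTE (dis2 b bs2)).
  + case: p1 ne {dis1 h12} => [|a p1] /= ne; last by left; exists a; rewrite !inE eqxx.
    by case: p2 ne {dis2 h21} => [//|b p2] _; right; exists b; rewrite !inE eqxx.
have empty s p : {subset s <= [set a | a \in p]} -> {in s, forall a, a \notin p} -> s = [::].
  by case: s => [//|a s] sp /(_ a (mem_head _ _)); have := sp a (mem_head _ _); rewrite inE => ->.
split; apply: empty.
- by move=> a as1; apply: in1; rewrite mem_cat as1 orbT.
- exact: dis1.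
- by move=> b bs2; apply: in2; rewrite mem_cat bs2 orbT.
- exact: dis2.
Qed.

Lemma linked_tail x y xs ys u : x \notin xs -> y \notin ys ->
  linked (x :: xs) (y :: ys) -> (forall b, b \in ys -> ~~ simP x b) ->
  (forall a, a \in xs -> simP y a -> a = u) -> linked xs ys.
Proof.
move=> xxs yys lk nx yu T1 T2 cl ne.
have nex a : a \in xs -> (a == x) = false by move=> axs; apply: contraNF xxs => /eqP <-.
have ney b : b \in ys -> (b == y) = false by move=> bys; apply: contraNF yys => /eqP <-.
have [uT|uT] := boolP (u \in T1).
  have [in1 in2] : {subset x :: xs <= x |: T1} /\ {subset y :: ys <= y |: T2}.
    apply: lk.
    - move=> a b; rewrite !inE => /orP[/eqP->|axs] /orP[/eqP->|bys] ab.
      + by rewrite !eqxx.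
      + by move: (nx b bys); rewrite ab.
      + by rewrite eqxx (yu a axs) ?uT ?orbT // simPC.
      + by rewrite nex // ney //= (cl a b).
    - case: ne => [[a axs aT]|[b bys bT]]; [left; exists a|right; exists b];
        by rewrite !inE ?axs ?bys ?aT ?bT ?orbT.
  split=> [a axs|b bys]; [move: (in1 a) | move: (in2 b)];
    by rewrite !inE ?axs ?bys ?nex ?ney ?orbT //= => /(_ isT).
have [in1 _] : {subset x :: xs <= T1 :\ x} /\ {subset y :: ys <= T2 :\ y}.
  apply: lk.
- move=> a b; rewrite !inE => /orP[/eqP->|axs] /orP[/eqP->|bys] ab.
  + by rewrite !eqxx.
  + by move: (nx b bys); rewrite ab.
  + by rewrite eqxx /= (yu a axs) ?(negbTE uT) ?andbF // simPC.
  + by rewrite nex // ney //= (cl a b).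
- case: ne => [[a axs aT]|[b bys bT]]; [left; exists a|right; exists b];
    by rewrite !inE ?axs ?bys ?aT ?bT ?nex ?ney ?orbT.
by move: (in1 x); rewrite !inE eqxx /= => /(_ isT).
Qed.

End Linked.

Section DecreasingWords.
Context {disp : Order.disp_t} {P : finPOrderType disp}.
Implicit Types (a b d x y z : P) (l r xs ys : seq P).

Definition desc : rel P := fun x y => y < x.

Lemma desc_trans : transitive desc.
Proof. by move=> y x z /= yx zy; apply: lt_trans zy yx. Qed.

Lemma desc_uniq xs : sorted desc xs -> uniq xs.
Proof. by apply: (sorted_uniq desc_trans) => x; rewrite /desc /= ltxx. Qed.

Lemma desc_lt_head x xs z : sorted desc (x :: xs) -> z \in xs -> z < x.
Proof. by move=> /(order_path_min desc_trans) /allP lt_x /lt_x. Qed.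

Lemma desc_le_head x xs z : sorted desc (x :: xs) -> z \in x :: xs -> z <= x.
Proof.
by move=> sx; rewrite inE => /orP[/eqP->//|/(desc_lt_head sx)/ltW].
Qed.

(* Two linked decreasing chains have incomparable tops: if x < y, say, then y
   is above every letter of x :: xs and so would be isolated. *)
Lemma heads_sim x y xs ys : sorted desc (x :: xs) -> sorted desc (y :: ys) ->
  linked (x :: xs) (y :: ys) -> simP x y.
Proof.
move=> sx sy lk; apply: contraT => /nsimP/orP[xy|yx].
  have [//] : x :: xs = [::] /\ ys = [::].
    apply: (linked_prefix (p1 := [::]) (p2 := [:: y]) (desc_uniq sx) (desc_uniq sy) lk).
    - by [].
    - by [].
    - move=> a b ax; rewrite inE => /eqP->.
      by apply/lt_nsim/(le_lt_trans (desc_le_head sx ax)).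
have [_ //] : xs = [::] /\ y :: ys = [::].
  apply: (linked_prefix (p1 := [:: x]) (p2 := [::]) (desc_uniq sx) (desc_uniq sy) lk).
  - by [].
  - move=> a b; rewrite inE => /eqP-> bys.
    by apply/gt_nsim/(le_lt_trans (desc_le_head sy bys)).
  - by [].
Qed.

Hypothesis tof : three_one_free (P := P).

Lemma sim_far d y y' ys b : sorted desc [:: y, y' & ys] -> simP d y ->
  b \in ys -> ~~ simP d b.
Proof.
move=> /= /andP[y'y sy'] dy bys; apply/negP => db.
have by' := desc_lt_head sy' bys.
exact: three_one_free_sim tof by' y'y db (sim_between by' y'y db dy) dy.
Qed.

Lemma has_sim_cons d x x' xs : sorted desc [:: x, x' & xs] -> simP d x ->
  has (simP d) (x' :: xs) = simP d x'.
Proof.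
move=> sx dx /=; case: (simP d x') => //=.
by apply/negbTE/hasPn => b; apply: sim_far sx dx.
Qed.

Lemma linked_one_rung x y xs ys : sorted desc (x :: xs) -> sorted desc (y :: ys) ->
  linked (x :: xs) (y :: ys) -> ~~ has (simP y) xs -> ~~ has (simP x) ys ->
  xs = [::] /\ ys = [::].
Proof.
move=> sx sy lk /hasPn y_xs /hasPn x_ys.
apply: (linked_prefix (p1 := [:: x]) (p2 := [:: y]) (desc_uniq sx) (desc_uniq sy) lk).
- by [].
- by move=> a b; rewrite inE => /eqP->; apply: x_ys.
- by move=> a b axs; rewrite inE => /eqP->; rewrite simPC; apply: y_xs.
Qed.

Lemma linked_two_rungs x x' xs y y' ys :
  sorted desc [:: x, x' & xs] -> sorted desc [:: y, y' & ys] ->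
  linked [:: x, x' & xs] [:: y, y' & ys] -> simP x y -> simP y x' -> simP x y' ->
  xs = [::] /\ ys = [::].
Proof.
move=> sx sy lk xy yx' xy'.
apply: (linked_prefix (p1 := [:: x; x']) (p2 := [:: y; y']) (desc_uniq sx) (desc_uniq sy) lk).
- by [].
- move=> a b ax bys; apply: sim_far sy _ bys.
  by move: ax; rewrite !inE => /orP[]/eqP->; rewrite // simPC.
- move=> a b axs yb; rewrite simPC; apply: sim_far sx _ axs.
  by move: yb; rewrite !inE => /orP[]/eqP->; rewrite // simPC.
Qed.

(* Peeling the top x (comparable to all of ys) and the top y (whose only
   possible neighbour in x' :: xs is x', by [sim_far]) keeps the rest linked. *)
Lemma linked_peel x x' xs y ys :
  sorted desc [:: x, x' & xs] -> sorted desc (y :: ys) ->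
  linked [:: x, x' & xs] (y :: ys) -> simP y x ->
  (forall b, b \in ys -> ~~ simP x b) -> linked (x' :: xs) ys.
Proof.
move=> sx sy lk yx x_ys.
apply: (linked_tail (u := x') _ _ lk x_ys).
- by case/andP: (desc_uniq sx).
- by case/andP: (desc_uniq sy).
- move=> a; rewrite inE => /orP[/eqP->//|axs] ya.
  by move: (sim_far sx yx axs); rewrite ya.
Qed.

(* The inductive step of the swap: x ~ y ~ x' and x is comparable to all of ys.
   Slide y down past xs, apply the cubic relation to x x' y, swap the tails,
   and slide x past ys. *)
Lemma swap_step x x' xs y ys :
  sorted desc [:: x, x' & xs] -> simP x y -> simP y x' ->
  (forall b, b \in ys -> ~~ simP x b) ->
  (forall l r, wcong (l ++ (x' :: xs) ++ ys ++ r) (l ++ ys ++ (x' :: xs) ++ r)) ->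
  forall l r,
  wcong (l ++ [:: x, x' & xs] ++ (y :: ys) ++ r) (l ++ (y :: ys) ++ [:: x, x' & xs] ++ r).
Proof.
move=> sx xy yx' xys tails l r.
have x'x : x' < x by rewrite (desc_lt_head sx) ?mem_head.
have x'y : simP x' y by rewrite simPC.
have yx : simP y x by rewrite simPC.
have y_xs a b : a \in xs -> b \in [:: y] -> ~~ simP a b.
  by move=> axs; rewrite inE => /eqP->; rewrite simPC; apply: sim_far sx yx axs.
have x_ys a b : a \in [:: x] -> b \in ys -> ~~ simP a b.
  by rewrite inE => /eqP->; apply: xys.
have slide_y := wcong_block (l ++ [:: x; x']) (ys ++ r) y_xs.
have cubic := wcong_three l (xs ++ ys ++ r) x'y yx x'x.
have swap_tails := tails (l ++ [:: y; x]) r.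
have slide_x := wcong_block (l ++ [:: y]) ((x' :: xs) ++ r) x_ys.
rewrite -!catA /= in slide_y cubic swap_tails slide_x *.
exact: wcong_trans slide_y (wcong_trans cubic (wcong_trans swap_tails slide_x)).
Qed.

(* By induction on xs: the tops x, y are
   incomparable; if both or neither of the second letters x', y' are adjacent
   across, connectedness forces equal lengths; otherwise [swap_step] (or its
   mirror image) reduces to the tails, which are again linked. *)
Lemma desc_swap xs ys : sorted desc xs -> sorted desc ys -> linked xs ys ->
  size xs != size ys -> forall l r, wcong (l ++ xs ++ ys ++ r) (l ++ ys ++ xs ++ r).
Proof.
elim: xs ys => [|x xs IH] [|y ys] sx sy lk sz l r; try exact: wcong_refl.
have xy : simP x y := heads_sim sx sy lk.
have yx : simP y x by rewrite simPC.
have tails : linked xs ys ->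
    forall l' r', wcong (l' ++ xs ++ ys ++ r') (l' ++ ys ++ xs ++ r').
  by move=> lk'; apply: IH (path_sorted sx) (path_sorted sy) lk' sz.
clear IH; case hx: (has (simP y) xs); case hy: (has (simP x) ys).
- case: xs sx hx lk sz {tails} => [//|x' xs] sx hx lk sz.
  case: ys sy hy lk sz => [//|y' ys] sy hy lk sz.
  rewrite (has_sim_cons sx yx) in hx; rewrite (has_sim_cons sy xy) in hy.
  have [xs0 ys0] := linked_two_rungs sx sy lk xy hx hy.
  by rewrite xs0 ys0 in sz.
- case: xs sx hx lk sz tails => [//|x' xs] sx hx lk sz tails.
  have yx' : simP y x' by rewrite -(has_sim_cons sx yx).
  have x_ys : forall b, b \in ys -> ~~ simP x b by apply/hasPn; rewrite hy.
  have lk' := linked_peel sx sy lk yx x_ys.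
  exact: (swap_step sx xy yx' x_ys (tails lk') l r).
- case: ys sy hy lk sz tails => [//|y' ys] sy hy lk sz tails.
  have xy' : simP x y' by rewrite -(has_sim_cons sy xy).
  have y_xs : forall a, a \in xs -> ~~ simP y a by apply/hasPn; rewrite hx.
  have lk' := linked_sym (linked_peel sy sx (linked_sym lk) xy y_xs).
  have tails' l' r' : wcong (l' ++ (y' :: ys) ++ xs ++ r') (l' ++ xs ++ (y' :: ys) ++ r').
    exact/wcong_sym/tails.
  exact/wcong_sym/(swap_step sy yx xy' y_xs tails').
- have [xs0 ys0] := linked_one_rung sx sy lk (negbT hx) (negbT hy).
  by rewrite xs0 ys0 in sz.
Qed.

End DecreasingWords.

Section ChainWords.
Context {disp : Order.disp_t} {P : finPOrderType disp}.
Implicit Types (C M Ab Be : {set P}) (s : seq P).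

Lemma uC_mem C : uC C =i C.
Proof. by move=> x; rewrite mem_sort mem_enum. Qed.

Lemma uC_size C : size (uC C) = #|C|.
Proof. by rewrite size_sort cardE. Qed.

Lemma sub_chain C M : is_chain C -> {subset M <= C} -> is_chain M.
Proof. by move=> chC MC x y /MC xC /MC yC; apply: chC. Qed.

Lemma uC_sorted C : is_chain C -> sorted desc (uC C).
Proof.
move=> chC; rewrite -rev_sorted lt_sorted_uniq_le rev_uniq sort_uniq enum_uniq /=.
rewrite rev_sorted; apply: (sort_sorted_in (P := mem C)); last first.
  by apply/allP => x; rewrite mem_enum.
by move=> x y xC yC; rewrite /= orbC; apply: chC.
Qed.

Lemma uC_eq C s : is_chain C -> sorted desc s -> s =i C -> uC C = s.
Proof.
move=> chC ss sC; apply: (irr_sorted_eq desc_trans) => //.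
- by move=> x; rewrite /desc /= ltxx.
- exact: uC_sorted.
- by move=> x; rewrite uC_mem sC.
Qed.

Lemma uC_cat3 C Ab M Be : is_chain C ->
  (forall z, (z \in C) = [|| z \in Ab, z \in M | z \in Be]) ->
  (forall x y, x \in Ab -> y \in M -> y < x) ->
  (forall x y, x \in M -> y \in Be -> y < x) ->
  (forall x y, x \in Ab -> y \in Be -> y < x) ->
  uC C = uC Ab ++ uC M ++ uC Be.
Proof.
move=> chC memC gtAM gtMB gtAB.
have band_chain (B : {set P}) : {subset B <= C} -> sorted desc (uC B).
  by move=> BC; apply/uC_sorted/(sub_chain chC BC).
apply: uC_eq chC _ _; last by move=> z; rewrite !mem_cat !uC_mem memC.
rewrite !(sorted_pairwise desc_trans) !pairwise_cat.
rewrite -!(sorted_pairwise desc_trans) !band_chain ?andbT;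
  try by move=> z zB; rewrite memC zB ?orbT.
apply/and3P; split=> //; apply/allrelP => x y; rewrite ?mem_cat !uC_mem.
- by move=> xA /orP[]; [apply: gtAM|apply: gtAB].
- exact: gtMB.
Qed.

End ChainWords.

Lemma connect_invariant (T : finType) (e : rel T) (Q : pred T) v :
  (forall x y, connect e v x -> connect e v y -> e x y -> Q x = Q y) ->
  forall w, connect e v w -> Q w = Q v.
Proof.
move=> inv w /connectP[p pth ->] {w}.
suff pathQ u : connect e v u -> path e u p -> Q (last u p) = Q u.
  exact: pathQ (connect0 e v) pth.
elim: p u {pth} => [//|y p IH] u vu /= /andP[uy py].
have vy : connect e v y := connect_trans vu (connect1 uy).
by rewrite IH // (inv u y).
Qed.

Section Ladder.
Context {disp : Order.disp_t} {P : finPOrderType disp}.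
Variables (A1 A2 : {set P}) (v : bool * P).
Hypotheses (chA1 : is_chain A1) (chA2 : is_chain A2) (vA : vert A1 A2 v).

Local Notation chainA b := (if b then A1 else A2).
Local Notation edge := (ladder_edge A1 A2).
Local Notation S c := (side [set w | connect (ladder_edge A1 A2) v w] c).

Lemma chainA_chain b : is_chain (chainA b).
Proof. by case: b. Qed.

Lemma vertE w : vert A1 A2 w = (w.2 \in chainA w.1).
Proof. by case: w => -[]. Qed.

Lemma mem_side c x : (x \in S c) = connect edge v (c, x).
Proof. by rewrite !inE. Qed.

Lemma ladder_side w : connect edge v w -> w.2 \in S w.1.
Proof. by case: w => c x; rewrite mem_side. Qed.

Lemma side_sub c : {subset S c <= chainA c}.
Proof.
move=> x; rewrite mem_side => vx.
have : vert A1 A2 (c, x).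
  rewrite (connect_invariant (Q := vert A1 A2) _ vx) //.
  by move=> w w' _ _ /and4P[-> ->].
by rewrite vertE.
Qed.

Lemma side_chain c : is_chain (S c).
Proof. exact: sub_chain (chainA_chain (b := c)) (@side_sub c). Qed.

(* A letter of A_b outside the ladder is comparable to every letter of the
   ladder: on its own side because A_b is a chain, on the other side because
   an incomparability edge would put it in the ladder. *)
Lemma outside_nsim b c z y : z \in chainA b :\: S b -> y \in S c -> ~~ simP z y.
Proof.
rewrite in_setD => /andP[zS zA] yS.
have [cb|ncb] := eqVneq c b.
  rewrite cb in yS; apply: chain_nsim (chainA_chain (b := b)) zA (side_sub yS) _.
  by apply: contraNneq zS => ->.
apply: contra zS => zy; rewrite mem_side.
apply: connect_trans (_ : connect edge v (c, y)) (connect1 _); first by rewrite -mem_side.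
by rewrite /ladder_edge !vertE /= zA (side_sub yS) ncb simPC zy.
Qed.

(* Such a letter lies on the same side of every letter of the ladder, since
   the ladder is connected by incomparability edges. *)
Lemma outside_same_side b c z y : z \in chainA b :\: S b -> y \in S c ->
  (y < z) = (v.2 < z).
Proof.
move=> zout; rewrite mem_side => vy.
apply: (connect_invariant (Q := fun w : bool * P => w.2 < z)) vy => x w vx vw.
case/and4P=> _ _ _ xw; apply: nsim_same_side xw _ _; apply: outside_nsim zout _;
  exact: ladder_side.
Qed.

Definition Above b := [set z | (z \in chainA b :\: S b) && (v.2 < z)].
Definition Below b := [set z | (z \in chainA b :\: S b) && (z < v.2)].

Lemma above_gt b c z y : z \in Above b -> y \in S c -> y < z.
Proof. by rewrite inE => /andP[zout vz] yS; rewrite (outside_same_side zout yS). Qed.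

Lemma below_lt b c z y : z \in Below b -> y \in S c -> z < y.
Proof.
rewrite inE => /andP[zout zv] yS.
case/orP: (nsimP (outside_nsim zout yS)) => // yz.
by move: yz; rewrite (outside_same_side zout yS) => /(lt_trans zv); rewrite ltxx.
Qed.

Lemma outside_bands b z : (z \in chainA b :\: S b) = (z \in Above b) || (z \in Below b).
Proof.
rewrite !inE -andb_orr; case zout: (_ && _) => //=; rewrite orbC; symmetry.
apply/nsimP/(outside_nsim (b := b) _ (ladder_side (connect0 edge v))).
by rewrite in_setD mem_side.
Qed.

Lemma bands_nsim b c z y : (z \in Above b) || (z \in Below b) -> y \in S c ->
  ~~ simP z y.
Proof. rewrite -outside_bands; exact: outside_nsim. Qed.

Lemma swap_chain b c : is_chain ((chainA b :\: S b) :|: S c).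
Proof.
move=> x y; rewrite !in_setU => /orP[xout|xS] /orP[yout|yS].
- by apply: (chainA_chain (b := b)); [move: xout|move: yout]; rewrite in_setD => /andP[].
- exact/nsim_cmp/(outside_nsim xout yS).
- by rewrite comparable_sym; exact/nsim_cmp/(outside_nsim yout xS).
- exact: side_chain xS yS.
Qed.

Lemma uC_swap b c :
  uC ((chainA b :\: S b) :|: S c) = uC (Above b) ++ uC (S c) ++ uC (Below b).
Proof.
apply: uC_cat3 (swap_chain (b := b) (c := c)) _ _ _ _.
- by move=> z; rewrite in_setU outside_bands orbAC -orbA.
- by move=> x y xA yS; apply: above_gt xA yS.
- by move=> x y yS yB; apply: below_lt yB yS.
- move=> x y; rewrite !inE => /andP[_ vx] /andP[_ yv]; exact: lt_trans yv vx.
Qed.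

Lemma uC_chainA b : uC (chainA b) = uC (Above b) ++ uC (S b) ++ uC (Below b).
Proof.
rewrite -uC_swap; congr uC; apply/setP => z; rewrite in_setU in_setD.
by case zS: (z \in S b); rewrite /= ?orbT ?orbF ?(side_sub zS).
Qed.

(* The two sides of the ladder are linked: a pair of sets closed under its
   edges and meeting it is, read as a vertex predicate, constant on the ladder. *)
Lemma sides_linked : linked (uC (S true)) (uC (S false)).
Proof.
move=> T1 T2 cl ne.
pose Q (w : bool * P) := if w.1 then w.2 \in T1 else w.2 \in T2.
have Qconst w : connect edge v w -> Q w = Q v.
  apply: connect_invariant => -[[] x] [[] y] vx vy /and4P[_ _ //= _ xy]; rewrite /Q /=.
    by apply: cl; rewrite ?uC_mem ?mem_side.
  by rewrite (cl y x) ?uC_mem ?mem_side // simPC.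
have Qv : Q v.
  case: ne => [[a aS aT]|[b bS bT]].
    by rewrite -(Qconst (true, a)) //; rewrite uC_mem mem_side in aS.
  by rewrite -(Qconst (false, b)) //; rewrite uC_mem mem_side in bS.
by split=> x; rewrite uC_mem mem_side => /Qconst; rewrite Qv.
Qed.

End Ladder.

Theorem mainTheorem19 (disp : Order.disp_t) (P : finPOrderType disp)
    (A1 A2 : {set P}) (H : {set bool * P}) :
  three_one_free (P := P) ->
  is_chain A1 -> is_chain A2 ->
  is_ladder A1 A2 H -> unbalanced H ->
  congr_IH (mon (uC A1 ++ uC A2))
           (mon (uC (swap1 A1 A2 H) ++ uC (swap2 A1 A2 H))).
Proof.
move=> tof chA1 chA2 [v vA ->] unbal.
have split_A b := uC_chainA chA1 chA2 vA b.
have split_swap b c := uC_swap chA1 chA2 vA b c.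
rewrite /swap1 /swap2 (split_A true) (split_A false).
rewrite (split_swap true false) (split_swap false true) -!catA.
apply: swap_middles => [l r|x y].
- apply: (desc_swap tof); rewrite ?uC_size //.
  + exact/uC_sorted/side_chain.
  + exact/uC_sorted/side_chain.
  + exact: sides_linked.
- rewrite !mem_cat !uC_mem => /orP[xB|xA] /orP[] yS.
  1,2: by apply: (bands_nsim chA1 chA2 vA (b := true) _ yS); rewrite xB orbT.
  all: by apply: (bands_nsim chA1 chA2 vA (b := false) _ yS); rewrite xA.
Qed.
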